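(* Let $X$ be a finite set, $G\le S_X$, $f\in N_{S_X}(G)$ and $\Gamma=\Gamma_r(G,f)$. Let $\bar f$ be the permutation of the set of $G$-orbits induced by $f$ (mapping $wG$ to $(wf)G$). Then: (i) $\Gamma$ is an $|X/G|$-partite digraph with parts $\{C_G(G_x):x\in X/G\}$; (ii) for $x,z\in X/G$, there exists an edge from $C_G(G_z)$ to $C_G(G_x)$ if and only if $\bar f$ maps $zG$ to $xG$; (iii) the digraph on $X/G$ obtained from $\Gamma$ by collapsing every vertex set $C_G(G_x)$ into a single vertex is a disjoint union of directed cycles, namely the cycle decomposition of $\bar f$; (iv) every vertex of $\Gamma$ has indegree $1$ and outdegree $1$, so $\Gamma$ is a union of disjoint directed cycles.
   Context: Permutations act on the right ($xf$ is the image of $x$ under $f$; $fg$ means $f$ first, then $g$); $g^f=f^{-1}gf$. For $G\le S_X$, $xG$ is the orbit of $x$, $G_x$ its stabilizer, $X/G$ a fixed complete set of orbit representatives; $C_G(H)$ is the centralizer and $N_{S_X}(G)$ the normalizer. For every $y\in X$ fix $g_y\in G$ with $xg_y=y$, where $x$ is the representative in $X/G$ of the orbit of $y$. The digraph (possibly with loops) $\Gamma_r(G,f)$, for $f\in N_{S_X}(G)$, has vertex set the formally disjoint union of the sets $C_G(G_x)$, $x\in X/G$; for $x,z\in X/G$, $\kappa_x\in C_G(G_x)$ and $\lambda_z\in C_G(G_z)$, there is a directed edge $\lambda_z\to\kappa_x$ if and only if, with $y=xf^{-1}$, we have $z=yg_y^{-1}$ and $\kappa_x=((\lambda_z)^{g_y})^f$.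 *)

(* Permutations of a finite set X are {perm X}; mathcomp's
   product p * q applies p first, then q, and x ^ y = y^-1 * x * y, matching
   the paper's right-action conventions. *)
From mathcomp Require Import all_boot all_fingroup.
Set Implicit Arguments. Unset Strict Implicit. Unset Printing Implicit Defensive.

Local Open Scope group_scope.

Section Gamma.
Variables (X : finType) (G : {group {perm X}}) (f : {perm X})
          (R : {set X}) (g : X -> {perm X}).

Definition orbit_transversal_of : Prop :=
  forall y : X, #|R :&: orbit 'P G y| = 1%N.

Definition orbit_movers : Prop :=
  forall y : X, g y \in G /\
    (forall x, x \in R -> x \in orbit 'P G y -> g y x = y).

(* Vertices of Gamma_r(G,f): the formally disjoint union of the C_G(G_x),
   x in R, encoded as pairs (x, kappa). *)
Definition Gvert : {set X * {perm X}} :=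
  [set v | (v.1 \in R) && (v.2 \in 'C_G('C_G[v.1 | 'P]))].

Definition Gedge (v w : X * {perm X}) : bool :=
  let y := (f^-1) w.1 in
  [&& v \in Gvert, w \in Gvert,
      v.1 == (g y)^-1 y & w.2 == (v.2 ^ g y) ^ f].

Definition Gpart (x : X) : {set X * {perm X}} :=
  [set v in Gvert | v.1 == x].

Definition Gcollapsed (z x : X) : Prop :=
  exists v w, [/\ v \in Gpart z, w \in Gpart x & Gedge v w].

End Gamma.

(** Because [f] normalises [G], it maps [G]-orbits to [G]-orbits and so
    induces a permutation [fbar] of the transversal [R].  Following an edge
    [lambda_z -> kappa_x] forces [x = fbar z], and conjugation by [g_y f]
    carries [C_G(G_z)] onto [C_G(G_x)] because it maps the point [z] to [x]
    and normalises [G].  Hence the out-neighbour of every vertex is unique: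
    the edge relation is the graph of an injective self-map of the finite
    vertex set, i.e. of a permutation, which gives in- and outdegree one. *)

From mathcomp Require Import all_boot all_fingroup.
Set Implicit Arguments. Unset Strict Implicit. Unset Printing Implicit Defensive.
Local Open Scope group_scope.

Section Normaliser.
Variables (X : finType) (G : {group {perm X}}).

Lemma mem_orbit_norm_sub (b : {perm X}) a c :
  b \in 'N(G) -> a \in orbit 'P G c -> b a \in orbit 'P G (b c).
Proof.
move=> bN /orbitP [h hG <-]; apply/orbitP; exists (h ^ b); first by rewrite memJ_norm.
by rewrite /= !apermE /conjg !permM permK.
Qed.

Lemma mem_orbit_norm (b : {perm X}) a c :
  b \in 'N(G) -> (b a \in orbit 'P G (b c)) = (a \in orbit 'P G c).
Proof.
move=> bN; apply/idP/idP; last exact: mem_orbit_norm_sub.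
by move/(mem_orbit_norm_sub (groupVr bN)); rewrite !permK.
Qed.

Lemma cent_astab1J_norm (b k : {perm X}) z :
  b \in 'N(G) -> k \in 'C_G('C_G[z | 'P]) -> k ^ b \in 'C_G('C_G[b z | 'P]).
Proof.
move=> bN kC; have -> : 'C_G[b z | 'P] = 'C_G[z | 'P] :^ b.
  by rewrite conjIg (normP bN) -astab1_act.
by rewrite inE centJ memJ_conjg memJ_norm // -in_setI.
Qed.

End Normaliser.

Lemma perm_graph_degrees (T : finType) (A : {set T}) (q : {perm T})
    (e : T -> T -> bool) :
  perm_on A q -> (forall v w, e v w <-> v \in A /\ q v = w) ->
  forall v, v \in A -> #|[set w | e w v]| = 1%N /\ #|[set w | e v w]| = 1%N.
Proof.
move=> qA eE v vA; split.
- suff -> : [set w | e w v] = [set q^-1 v] by rewrite cards1.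
  apply/setP => w; rewrite !inE.
  apply/idP/eqP => [/eE [_ <-] | ->]; first by rewrite permK.
  by apply/eE; rewrite permKV -(perm_closed _ qA) permKV.
- suff -> : [set w | e v w] = [set q v] by rewrite cards1.
  by apply/setP => w; rewrite !inE; apply/idP/eqP => [/eE [_ <-] | ->] //; apply/eE.
Qed.

Section Transversal.
Variables (X : finType) (G : {group {perm X}}) (R : {set X}) (g : X -> {perm X}).
Hypotheses (trR : orbit_transversal_of G R) (mvg : orbit_movers G R g).

Definition orbit_rep (y : X) : X := (g y)^-1 y.

Lemma orbit_rep_uniq x y : x \in R -> x \in orbit 'P G y -> x = orbit_rep y.
Proof. by move=> xR xy; apply: (@perm_inj _ (g y)); rewrite permKV (proj2 (mvg y)). Qed.

Lemma orbit_rep_mem y : orbit_rep y \in R :&: orbit 'P G y.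
Proof.
have [x0 Rx0] := cards1P (introT eqP (trR y)).
have := set11 x0; rewrite -Rx0 => x0Ry.
by case/setIP: (x0Ry) => x0R x0y; rewrite -(orbit_rep_uniq x0R x0y).
Qed.

Lemma orbit_rep_in y : orbit_rep y \in R.
Proof. by case/setIP: (orbit_rep_mem y). Qed.

Lemma orbit_rep_eq y : orbit 'P G (orbit_rep y) = orbit 'P G y.
Proof. by apply/orbit_eqP; case/setIP: (orbit_rep_mem y). Qed.

Lemma transversal_orbitP x y :
  x \in R -> reflect (x = orbit_rep y) (x \in orbit 'P G y).
Proof.
move=> xR; apply: (iffP idP); first exact: orbit_rep_uniq.
by move=> ->; case/setIP: (orbit_rep_mem y).
Qed.

Lemma transversal_orbit_inj a c :
  a \in R -> c \in R -> orbit 'P G a = orbit 'P G c -> a = c.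
Proof.
move=> aR cR ac; have ac' : a \in orbit 'P G c by rewrite -ac orbit_refl.
by rewrite (orbit_rep_uniq aR ac'); apply/esym/orbit_rep_uniq/orbit_refl.
Qed.

Lemma card_transversal : #|R| = #|[set orbit 'P G y | y : X]|.
Proof.
have -> : [set orbit 'P G y | y : X] = [set orbit 'P G y | y in R].
  apply/setP => O; apply/imsetP/imsetP => -[y _ ->]; last by exists y.
  by exists (orbit_rep y); rewrite ?orbit_rep_in ?orbit_rep_eq.
by rewrite card_in_imset //; exact: transversal_orbit_inj.
Qed.

Lemma mem_Gvert x k : ((x, k) \in Gvert G R) = (x \in R) && (k \in 'C_G('C_G[x | 'P])).
Proof. by rewrite inE. Qed.

Lemma mem_Gpart v x : (v \in Gpart G R x) = (v \in Gvert G R) && (v.1 == x).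
Proof. by rewrite [v \in Gpart _ _ _]inE. Qed.

Lemma Gpart_one x : x \in R -> (x, 1) \in Gpart G R x.
Proof. by move=> xR; rewrite inE mem_Gvert xR group1 eqxx. Qed.

Lemma GpartE x : x \in R -> Gpart G R x = [set (x, k) | k in 'C_G('C_G[x | 'P])].
Proof.
move=> xR; apply/setP => -[a k]; rewrite inE mem_Gvert /=.
apply/andP/imsetP => [[/andP [_ kC] /eqP ax] | [k' kC [-> ->]]].
  by subst a; exists k.
by rewrite xR kC eqxx.
Qed.

Lemma partition_Gpart : partition [set Gpart G R x | x in R] (Gvert G R).
Proof.
apply/and3P; split.
- apply/eqP/setP => v; apply/bigcupP/idP => [[B /imsetP [x _ ->]] | vV].
    by rewrite inE => /andP [].
  exists (Gpart G R v.1); last by rewrite inE vV eqxx.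
  by apply: imset_f; case: v vV => z k; rewrite mem_Gvert => /andP [].
- apply/trivIsetP => _ _ /imsetP [x _ ->] /imsetP [x' _ ->] neq.
  rewrite -setI_eq0; apply/eqP/setP => v; rewrite !inE.
  apply/negbTE/negP => /andP [/andP [_ /eqP vx] /andP [_ /eqP vx']].
  by move: neq; rewrite -vx -vx' eqxx.
- by apply/imsetP => -[x xR Ex]; have := Gpart_one xR; rewrite -Ex inE.
Qed.

Lemma card_Gparts : #|[set Gpart G R x | x in R]| = #|R|.
Proof.
rewrite card_in_imset // => x x' xR _ Exx'.
by have := Gpart_one xR; rewrite Exx' inE => /andP [_ /eqP].
Qed.

Section Induced.
Variable f : {perm X}.
Hypothesis fN : f \in 'N(G).

Definition fbar_fun (z : X) : X := if z \in R then orbit_rep (f z) else z.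

Lemma fbar_fun_inj : injective fbar_fun.
Proof.
move=> a c; rewrite /fbar_fun.
case: ifP => aR; case: ifP => cR Eac //.
- apply: transversal_orbit_inj => //; apply/orbit_eqP.
  rewrite -(mem_orbit_norm _ _ fN) -orbit_rep_eq -Eac orbit_rep_eq.
  exact: orbit_refl.
- by move: cR; rewrite -Eac orbit_rep_in.
- by move: aR; rewrite Eac orbit_rep_in.
Qed.

Definition fbar : {perm X} := perm fbar_fun_inj.

Lemma fbarE z : z \in R -> fbar z = orbit_rep (f z).
Proof. by move=> zR; rewrite permE /fbar_fun zR. Qed.

Lemma perm_on_fbar : perm_on R fbar.
Proof. by apply/subsetP => z; rewrite inE permE /fbar_fun; case: ifP => // _; rewrite eqxx. Qed.

Lemma orbit_fbar z : z \in R -> orbit 'P G (fbar z) = orbit 'P G (f z).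
Proof. by move=> zR; rewrite fbarE // orbit_rep_eq. Qed.

Lemma fbar_orbitP z x :
  z \in R -> x \in R -> reflect (fbar z = x) (f z \in orbit 'P G x).
Proof.
move=> zR xR; rewrite orbit_sym fbarE //.
by apply: (iffP (transversal_orbitP _ xR)) => ->.
Qed.

Lemma fbar_eq_rep z x :
  z \in R -> x \in R -> fbar z = x <-> z = orbit_rep (f^-1 x).
Proof.
move=> zR xR; apply: (iff_trans (rwP (fbar_orbitP zR xR))).
rewrite -{1}(permKV f x) (mem_orbit_norm _ _ fN).
exact: iff_sym (rwP (transversal_orbitP _ zR)).
Qed.

(* The edge condition solved for its head: [x = fbar z], [kappa = (lambda ^ g_y) ^ f] with [y = f^-1 x]. *)
Definition Gsucc (v : X * {perm X}) : X * {perm X} :=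
  if v \in Gvert G R then (fbar v.1, (v.2 ^ g (f^-1 (fbar v.1))) ^ f) else v.

Lemma Gsucc_vert v : v \in Gvert G R -> Gsucc v \in Gvert G R.
Proof.
case: v => z k vV; rewrite /Gsucc vV; move: vV; rewrite !mem_Gvert /=.
case/andP => zR kC; have fzR : fbar z \in R by rewrite fbarE ?orbit_rep_in.
rewrite fzR /=; set y := f^-1 (fbar z).
have zE : z = orbit_rep y by apply/fbar_eq_rep.
have gyz : f (g y z) = fbar z by rewrite {1}zE /orbit_rep !permKV.
have gyN : g y \in 'N(G) by rewrite (subsetP (normG G)) //; case: (mvg y).
by rewrite -gyz; apply: cent_astab1J_norm => //; apply: cent_astab1J_norm.
Qed.

Lemma Gsucc_inj : injective Gsucc.
Proof.
move=> v w; rewrite /Gsucc.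
case vV: (v \in Gvert G R); case wV: (w \in Gvert G R) => Evw //.
- case: v w {vV wV} Evw => z k [z' k'] /= [/perm_inj <-].
  by move=> /conjg_inj /conjg_inj ->.
- by have := Gsucc_vert vV; rewrite /Gsucc vV Evw wV.
- by have := Gsucc_vert wV; rewrite /Gsucc wV -Evw vV.
Qed.

Definition Gsucc_perm : {perm X * {perm X}} := perm Gsucc_inj.

Lemma perm_on_Gsucc : perm_on (Gvert G R) Gsucc_perm.
Proof. by apply/subsetP => v; rewrite inE permE /Gsucc; case: ifP => // _; rewrite eqxx. Qed.

Lemma GedgeP v w : Gedge G f R g v w <-> v \in Gvert G R /\ Gsucc_perm v = w.
Proof.
rewrite permE; split.
- case: v w => [z k] [x l]; rewrite /Gedge /=.
  case/and4P => vV wV /eqP zE /eqP ->; split => //; rewrite /Gsucc vV /=.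
  move: vV wV; rewrite !mem_Gvert => /andP [zR _] /andP [xR _].
  by rewrite (proj2 (fbar_eq_rep zR xR) zE).
- case=> vV <-; have := Gsucc_vert vV; case: v vV => z k vV.
  rewrite /Gedge /Gsucc vV /= => ->; rewrite eqxx andbT /=.
  move: vV; rewrite mem_Gvert => /andP [zR _].
  by apply/eqP/fbar_eq_rep; rewrite ?fbarE ?orbit_rep_in.
Qed.

Lemma GcollapsedP z x :
  z \in R -> x \in R -> Gcollapsed G f R g z x <-> fbar z = x.
Proof.
move=> zR xR; split.
- case=> v [w [vz wx /GedgeP [vV Ev]]].
  move: vz wx; rewrite !mem_Gpart => /andP [_ /eqP <-] /andP [_ /eqP <-].
  by rewrite -Ev [Gsucc_perm v]permE /Gsucc vV.
- move=> zx; exists (z, 1), (Gsucc_perm (z, 1)).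
  have vV : (z, 1) \in Gvert G R by rewrite mem_Gvert zR group1.
  split; [exact: Gpart_one | | exact/GedgeP].
  by rewrite mem_Gpart (perm_closed _ perm_on_Gsucc) vV permE /Gsucc vV /= zx.
Qed.

End Induced.
End Transversal.

Theorem proposition5p1 (X : finType) (G : {group {perm X}}) (f : {perm X})
    (R : {set X}) (g : X -> {perm X}) :
  f \in 'N(G) ->
  orbit_transversal_of G R ->
  orbit_movers G R g ->
  [/\
   (* (i) *)
   [/\ partition [set Gpart G R x | x in R] (Gvert G R),
       #|[set Gpart G R x | x in R]| = #|R|,
       #|R| = #|[set orbit 'P G y | y : X]| &
       forall x, x \in R -> Gpart G R x = [set (x, k) | k in 'C_G('C_G[x | 'P])]],
   (* (ii) *)
   (forall x z, x \in R -> z \in R ->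
      Gcollapsed G f R g z x <-> orbit 'P G (f z) = orbit 'P G x),
   (* (iii) *)
   (exists p : {perm X}, [/\ perm_on R p,
      (forall z, z \in R -> orbit 'P G (p z) = orbit 'P G (f z)) &
      (forall z x, z \in R -> x \in R -> Gcollapsed G f R g z x <-> p z = x)]) &
   (* (iv) *)
   [/\ (forall v, v \in Gvert G R ->
          #|[set w | Gedge G f R g w v]| = 1%N /\
          #|[set w | Gedge G f R g v w]| = 1%N) &
       exists q : {perm X * {perm X}}, perm_on (Gvert G R) q /\
          (forall v w, Gedge G f R g v w <-> (v \in Gvert G R /\ q v = w))]].
Proof.
move=> fN trR mvg; split.
- split; [exact: partition_Gpart | exact: card_Gparts |
          exact: card_transversal | exact: GpartE].
- move=> x z xR zR; apply: (iff_trans (GcollapsedP trR mvg fN zR xR)).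
  apply: (iff_trans (rwP (fbar_orbitP trR mvg fN zR xR))).
  exact: iff_sym (rwP orbit_eqP).
- exists (fbar trR mvg fN).
  by split; [exact: perm_on_fbar | exact: orbit_fbar | exact: GcollapsedP].
- have GsuccP := GedgeP trR mvg fN.
  split; first exact: perm_graph_degrees (perm_on_Gsucc trR mvg fN) GsuccP.
  by exists (Gsucc_perm trR mvg fN); split; [exact: perm_on_Gsucc |].
Qed.
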